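(* Let $U\in\mathcal U_n$ and let $U'\in\mathcal U_{n+1}$ be obtained from $U$ by adding an $(n+1)$-st unit interval $I_{n+1}$ to the right of the intervals of $U$. Let $s$ be the number of elements $i\in\{1,\dots,n\}$ that are incomparable to $n+1$ in $U'$. Then $a(U')$ is obtained from $a(U)$ by adding a final peak in position $(n-s,n+1)$.
   Context: A unit interval order on $\{1,\dots,n\}$ is given by closed intervals $I_1,\dots,I_n$ of length $1$, numbered from left to right, with $i\prec j$ iff $I_i$ lies strictly to the left of $I_j$; $\mathcal U_n$ is the set of these; adding $I_{n+1}$ to the right means $I_1,\dots,I_{n+1}$ remain numbered from left to right. A Dyck path of length $n$ is a lattice path from $(0,0)$ to $(n,n)$ with unit up and right steps never going below $y=x$. For $1\le i<j\le n$, box $(i,j)$ is the square $[i-1,i]\times[j-1,j]$; the area set of a Dyck path is the set of boxes between it and the diagonal. $a(U)$ is the Dyck path whose area set is $\{(i,j):1\le i<j\le n,\ i\not\prec j\}$. Adding a final peak in position $(i,n+1)$ to a Dyck path $D$ of length $n$ means: $D$ passes through $(i,n)$, and the new path of length $n+1$ follows $D$ up to $(i,n)$, then takes an up step to $(i,n+1)$, then right steps to $(n+1,n+1)$. *)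

From mathcomp Require Import all_boot all_order all_algebra.
From mathcomp Require Import reals.
Set Implicit Arguments. Unset Strict Implicit. Unset Printing Implicit Defensive.
Import Order.TTheory GRing.Theory Num.Theory.

(* ---------- Unit interval orders ----------
   A unit interval order on {1..n} is given by closed unit intervals
   I_i = [a i, a i + 1], i = 1..n, numbered from left to right
   (i.e. the left endpoints a 1 <= a 2 <= ... <= a n).  Indices are the
   natural numbers 1..n; values of a outside this range are irrelevant. *)

Definition left_to_right (R : realType) (a : nat -> R) (n : nat) : Prop :=
  forall i, 1 <= i -> i < n -> (a i <= a i.+1)%R.

Definition prec (R : realType) (a : nat -> R) (i j : nat) : bool :=
  (a i + 1 < a j)%R.

Definition incomparable (R : realType) (a : nat -> R) (i j : nat) : bool :=
  ~~ prec a i j && ~~ prec a j i.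

(* ---------- Dyck paths ----------
   A lattice path is a sequence of steps: true = up step (0,1),
   false = right step (1,0), starting at (0,0). *)

Definition xpos (D : seq bool) (k : nat) : nat := count (fun b => ~~ b) (take k D).
Definition ypos (D : seq bool) (k : nat) : nat := count id (take k D).

Definition dyck (n : nat) (D : seq bool) : Prop :=
  [/\ size D = (n + n)%N, count id D = n &
      forall k, xpos D k <= ypos D k].

(* height of the i-th right step (the one going from x = i-1 to x = i) *)
Definition rheight (D : seq bool) (i : nat) : nat :=
  ypos D (nth (size D) [seq k <- iota 0 (size D) | ~~ nth true D k] i.-1).

(* Box (i,j) = [i-1,i] x [j-1,j], 1 <= i < j <= n, lies in the area set
   (between the path and the diagonal) iff it lies below the right step
   of the path in column i. *)
Definition area (n : nat) (D : seq bool) (i j : nat) : bool :=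
  [&& 1 <= i, i < j, j <= n & j <= rheight D i].

Definition passes (D : seq bool) (x y : nat) : Prop :=
  exists k, k <= size D /\ xpos D k = x /\ ypos D k = y.

(* Adding a final peak in position (i, n+1) to a Dyck path D of length n:
   follow D up to (i, n) (reached after i + n steps), one up step, then
   right steps to (n+1, n+1). *)
Definition add_final_peak (n : nat) (D : seq bool) (i : nat) : seq bool :=
  take (i + n) D ++ true :: nseq (n.+1 - i) false.

(* D is the Dyck path a(U) for the unit interval order U on {1..n} given
   by the intervals with left endpoints a: its area set is
   {(i,j) : 1 <= i < j <= n, not i < j in U}. *)
Definition is_aU (R : realType) (a : nat -> R) (n : nat) (D : seq bool) : Prop :=
  dyck n D /\
  forall i j, area n D i j = [&& 1 <= i, i < j, j <= n & ~~ prec a i j].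

Definition s_incomp (R : realType) (a : nat -> R) (n : nat) : nat :=
  count (fun i => incomparable a i n.+1) (iota 1 n).

From mathcomp Require Import all_boot all_order all_algebra.
From mathcomp Require Import reals.
From mathcomp Require Import zify.
Set Implicit Arguments. Unset Strict Implicit. Unset Printing Implicit Defensive.
Import Order.TTheory Num.Theory.

(* A Dyck path is determined by the heights of its right steps, and column i
   of a(U) has height max {j : i ⊀ j}: since the left endpoints increase, the
   j with i ⊀ j form an initial segment. In U' the i ≺ n+1 also form an
   initial segment, namely i <= n - s. Hence columns 1..n-s of a(U') keep
   their heights from a(U) while the remaining columns reach height n+1; and
   a(U) passes through (n-s, n) because column n-s+1 already has height n
   (n-s+1 ⊀ n+1 forces n-s+1 ⊀ n). This is exactly the final peak at
   (n-s, n+1). *)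

Section LatticePaths.

Implicit Types (D p q : seq bool) (h : nat -> nat).

Fixpoint rstep_height D (k : nat) : nat :=
  match D with
  | [::] => 0
  | true :: D' => (rstep_height D' k).+1
  | false :: D' => if k is k'.+1 then rstep_height D' k' else 0
  end.

Definition nright D : nat := count (fun b => ~~ b) D.

Lemma right_positions_cons b D :
  [seq k <- iota 0 (size (b :: D)) | ~~ nth true (b :: D) k] =
  (if b then [::] else [:: 0]) ++ map S [seq k <- iota 0 (size D) | ~~ nth true D k].
Proof.
rewrite /=; have -> : iota 1 (size D) = map S (iota 0 (size D)).
  by rewrite -(addn0 1) iotaDl; apply: eq_map.
by rewrite filter_map; case: b.
Qed.

Lemma rheightE D k : rheight D k.+1 = rstep_height D k.
Proof.
have nth_mapS (s : seq nat) x0 i : nth x0.+1 (map S s) i = (nth x0 s i).+1.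
  by elim: s i => [|x s IH] [|i] //=.
rewrite /rheight /=; elim: D k => [|b D IH] k; first by case: k.
rewrite right_positions_cons; case: b k => [|] [|k] //=;
  by rewrite nth_mapS /ypos /= -IH.
Qed.

Lemma rstep_height_cat p q k :
  rstep_height (p ++ q) k =
  if k < nright p then rstep_height p k else count id p + rstep_height q (k - nright p).
Proof.
rewrite /nright; elim: p k => [|[] p IH] k /=; first by rewrite subn0.
  by rewrite IH; case: ifP.
by case: k => [|k] //=; rewrite IH ltnS subSS.
Qed.

Lemma rstep_height_le D k : rstep_height D k <= count id D.
Proof. by elim: D k => [|[] D IH] [|k] //=; rewrite add1n ltnS. Qed.

Lemma rstep_height_nseq_false m k : rstep_height (nseq m false) k = 0.
Proof. by elim: m k => [|m IH] [|k] //=. Qed.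

Lemma rstep_height_column d k : rstep_height (nseq d true ++ [:: false]) k = d.
Proof. by elim: d => [|d IH] /=; [case: k | rewrite IH]. Qed.

Lemma right_step_position D k : k < nright D ->
  exists m, [/\ m < size D, xpos D m = k, ypos D m = rstep_height D k,
                xpos D m.+1 = k.+1 & ypos D m.+1 = rstep_height D k].
Proof.
rewrite /nright /xpos /ypos.
elim: D k => [|[] D IH] k //=.
  by move=> /IH [m [? xm ym xm' ym']]; exists m.+1; rewrite /= xm ym xm' ym'.
case: k => [|k] /=; first by exists 0; split; rewrite /= ?take0.
by rewrite ltnS => /IH [m [? xm ym xm' ym']]; exists m.+1; rewrite /= xm ym xm' ym'.
Qed.

Lemma nright_add_count D : nright D + count id D = size D.
Proof. by rewrite addnC -(count_predC id). Qed.

Lemma nright_count n D : size D = n + n -> count id D = n -> nright D = n.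
Proof. by move=> sD cD; have := nright_add_count D; rewrite sD cD; lia. Qed.

Lemma dyck_nright n D : dyck n D -> nright D = n.
Proof. by case=> sD cD _; apply: nright_count. Qed.

Lemma dyck_rstep_height n D k : dyck n D -> k < n -> k < rstep_height D k.
Proof.
move=> dD; rewrite -(dyck_nright dD) => /right_step_position [m [_ _ _ xm ym]].
by case: dD => _ _ /(_ m.+1); rewrite xm ym.
Qed.

(* A point with x = k.+1 comes after the right step in column k.+1, so its
   height is at least rstep_height D k > k. *)
Lemma dyck_of_rstep_height n D : size D = n + n -> count id D = n ->
  (forall k, k < n -> k < rstep_height D k) -> dyck n D.
Proof.
move=> sD cD above; split=> // m; rewrite /xpos /ypos.
case Ex : (count _ (take m D)) => [|x] //.
have xD : x < nright D.
  rewrite -(cat_take_drop m D) /nright count_cat Ex; lia.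
have := above x; rewrite -(nright_count sD cD) => /(_ xD).
rewrite -{1}(cat_take_drop m D) rstep_height_cat /nright Ex ltnSn.
have := rstep_height_le (take m D) x; lia.
Qed.

Lemma passes_rstep D k : k < nright D -> passes D k (rstep_height D k).
Proof. by case/right_step_position=> m [? ? ? _ _]; exists m; split; first exact: ltnW. Qed.

Lemma passes_end D : passes D (nright D) (count id D).
Proof. by exists (size D); rewrite /xpos /ypos take_size. Qed.

Lemma passes_take D x y : passes D x y ->
  [/\ x + y <= size D, nright (take (x + y) D) = x & count id (take (x + y) D) = y].
Proof.
case=> m [mD [xm ym]].
have mE : m = x + y.
  by rewrite -xm -ym -{1}(size_takel mD) -nright_add_count.
by rewrite -mE.
Qed.

Lemma rstep_height_add_final_peak n D x k : passes D x n ->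
  rstep_height (add_final_peak n D x) k = if k < x then rstep_height D k else n.+1.
Proof.
case/passes_take=> _ rp up; rewrite /add_final_peak rstep_height_cat rp up.
case: ifP => kx; last by rewrite /= rstep_height_nseq_false addn1.
by rewrite -{2}(cat_take_drop (x + n) D) rstep_height_cat rp kx.
Qed.

Lemma dyck_add_final_peak n D x : dyck n D -> passes D x n ->
  dyck n.+1 (add_final_peak n D x).
Proof.
move=> dD pD; have xn : x <= n.
  by case: (pD) => m [_ [<- <-]]; case: dD => _ _.
case/passes_take: (pD) => xnD _ up.
apply: dyck_of_rstep_height => [||k kn].
- by rewrite size_cat size_takel //= size_nseq; lia.
- by rewrite count_cat up /= count_nseq /=; lia.
rewrite rstep_height_add_final_peak //; case: ifP => // kx.
by apply: dyck_rstep_height dD _; lia.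
Qed.

Fixpoint path_of_heights h (k : nat) : seq bool :=
  if k is k'.+1 then path_of_heights h k' ++ (nseq (h k - h k') true ++ [:: false])
  else [::].

Lemma path_of_heightsP h k : h 0 = 0 -> (forall i, i < k -> h i <= h i.+1) ->
  [/\ size (path_of_heights h k) = k + h k, count id (path_of_heights h k) = h k &
      forall i, i < k -> rstep_height (path_of_heights h k) i = h i.+1].
Proof.
move=> h0; elim: k => [|k IH] hle /=; first by rewrite h0.
have [sP cP rP] := IH (fun i ik => hle i (ltnW ik)).
have hk := hle k (ltnSn k).
have rightP : nright (path_of_heights h k) = k.
  by have := nright_add_count (path_of_heights h k); rewrite sP cP; lia.
split.
- by rewrite !size_cat sP size_nseq /=; lia.
- by rewrite !count_cat cP count_nseq /=; lia.
move=> i ik; rewrite rstep_height_cat rightP; case: ifP => [|ik']; first exact: rP.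
have -> : i = k by lia.
by rewrite subnn rstep_height_column cP; lia.
Qed.

Lemma dyck_path_of_heights n h : h 0 = 0 -> (forall i, i < n -> h i <= h i.+1) ->
  (forall i, 1 <= i <= n -> i <= h i) -> h n = n ->
  dyck n (path_of_heights h n).
Proof.
move=> h0 hle hi hn; have [sP cP rP] := path_of_heightsP h0 hle.
apply: dyck_of_rstep_height => [||k kn]; rewrite ?sP ?cP ?hn //.
by rewrite rP //; apply: hi; lia.
Qed.

End LatticePaths.

Lemma count_iota_downclosed (P : pred nat) n :
  (forall j j', 1 <= j' -> j' <= j -> j <= n -> P j -> P j') ->
  forall j, 1 <= j <= n -> P j = (j <= count P (iota 1 n)).
Proof.
move=> Pdown j /andP[j1 jn].
rewrite -(subnKC jn) iotaD count_cat.
case Pj: (P j).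
  have -> : count P (iota 1 j) = j.
    apply/eqP; rewrite -{2}(size_iota 1 j) -all_count; apply/allP => i.
    by rewrite mem_iota => /andP[i1 ij]; apply: (Pdown j) => //; lia.
  by rewrite leq_addr.
have -> : count P (iota (1 + j) (n - j)) = 0.
  apply/eqP; rewrite -leqn0 leqNgt -has_count; apply/hasPn => i.
  rewrite mem_iota => /andP[ji iN]; apply/negP => Pi.
  by have := Pdown i j j1 (ltnW ji) ltac:(lia) Pi; rewrite Pj.
rewrite -(subnK j1) iotaD count_cat /= subnKC // subnK // Pj !addn0.
by have := count_size P (iota 1 (j - 1)); rewrite size_iota; lia.
Qed.

Section IntervalOrder.

Variables (R : realType) (a : nat -> R) (N : nat).
Hypothesis a_le : left_to_right a N.

Lemma left_to_right_le i j : 1 <= i -> i <= j -> j <= N -> (a i <= a j)%R.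
Proof.
move=> i1 ij jN; rewrite -(subnKC ij).
elim: (j - i) (leq_sub2r i jN) => [|d IH] dN; first by rewrite addn0.
apply: le_trans (IH (ltnW dN)) _; rewrite addnS; apply: a_le; lia.
Qed.

Lemma prec_irr i : ~~ prec a i i.
Proof. by rewrite /prec -leNgt lerDl ler01. Qed.

Lemma prec_le_l i i' j : 1 <= i' -> i' <= i -> i <= N -> prec a i j -> prec a i' j.
Proof.
by move=> i1 ii iN; apply: le_lt_trans; rewrite lerD2r left_to_right_le.
Qed.

Lemma prec_le_r i j j' : 1 <= j -> j <= j' -> j' <= N -> prec a i j -> prec a i j'.
Proof. by move=> j1 jj jN /lt_le_trans; apply; rewrite left_to_right_le. Qed.

Lemma nprec_ge i j : 1 <= j -> j <= i -> i <= N -> ~~ prec a i j.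
Proof.
move=> j1 ji iN; apply/negP => /(prec_le_l j1 ji iN).
by rewrite (negbTE (prec_irr j)).
Qed.

End IntervalOrder.

Section UnitIntervalOrderPath.

Variables (R : realType) (a : nat -> R) (n : nat).
Hypothesis a_le : left_to_right a n.

(* The j with i ⊀ j form the initial segment [1, aU_height i]; the value at 0
   is the height where the path starts. *)
Definition aU_height (i : nat) : nat :=
  if i is 0 then 0 else count (fun j => ~~ prec a i j) (iota 1 n).

Lemma nprec_aU_height i j : 1 <= i <= n -> 1 <= j <= n ->
  ~~ prec a i j = (j <= aU_height i).
Proof.
case: i => [|i] // /andP[_ iN].
apply: (count_iota_downclosed (P := fun j => ~~ prec a i.+1 j)) => k k' k1 kk kN.
by apply: contra; apply: (prec_le_r a_le).
Qed.

Lemma aU_height_ge i : 1 <= i <= n -> i <= aU_height i.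
Proof. by move=> iN; rewrite -nprec_aU_height ?prec_irr. Qed.

Lemma aU_height_le i : aU_height i <= n.
Proof. by case: i => [|i] //=; rewrite -[leqRHS](size_iota 1) count_size. Qed.

Lemma aU_height_mono i : i < n -> aU_height i <= aU_height i.+1.
Proof.
case: i => [|i] iN //=; apply: sub_count => j /=.
by apply: contra; apply: (prec_le_l a_le); lia.
Qed.

Lemma aU_exists : exists D, is_aU a n D.
Proof.
have hn : aU_height n = n.
  case: (posnP n) => [-> //| n0].
  by apply/eqP; rewrite eqn_leq aU_height_le aU_height_ge // n0 leqnn.
have dP := dyck_path_of_heights erefl aU_height_mono aU_height_ge hn.
exists (path_of_heights aU_height n); split => // -[|i] j //.
have [_ _ hP] := path_of_heightsP (k := n) erefl aU_height_mono.
rewrite /area rheightE; case: (ltnP i.+1 j) => ij; case: (leqP j n) => jn //=.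
by rewrite hP ?nprec_aU_height //; lia.
Qed.

End UnitIntervalOrderPath.

Lemma area_aU (R : realType) (a : nat -> R) n D i j : is_aU a n D ->
  i.+1 < j -> j <= n -> (j <= rstep_height D i) = ~~ prec a i.+1 j.
Proof. by case=> _ areaD ij jn; have := areaD i.+1 j; rewrite /area rheightE ij jn. Qed.

Section AddIntervalRight.

Variables (R : realType) (a : nat -> R) (n : nat).
Hypothesis a_le : left_to_right a n.+1.

Local Notation t := (n - s_incomp a n).

Lemma prec_last i : 1 <= i <= n -> prec a i n.+1 = (i <= t).
Proof.
have -> : t = count (fun i => prec a i n.+1) (iota 1 n).
  have -> : s_incomp a n = count (predC (fun i => prec a i n.+1)) (iota 1 n).
    apply: eq_in_count => j; rewrite mem_iota => /andP[j1 jN].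
    by rewrite /incomparable /= (@nprec_ge _ _ _ a_le n.+1 j) ?andbT //; lia.
  by rewrite -[n in n - _](size_iota 1) -(count_predC (fun i => prec a i n.+1)) addnK.
apply: (count_iota_downclosed (P := fun i => prec a i n.+1)) => k k' k1 kk kN.
by apply: (prec_le_l a_le) => //; lia.
Qed.

Lemma aU_column_top D : is_aU a n D -> t < n -> rstep_height D t = n.
Proof.
move=> aD tn; have := rstep_height_le D t; case: (aD) => -[_ -> _] _ le_n.
apply/eqP; rewrite eqn_leq le_n /=.
case: (ltnP t.+1 n) => [tn'|]; last by have := dyck_rstep_height aD.1 tn; lia.
rewrite (area_aU aD) //.
have : ~~ prec a t.+1 n.+1 by rewrite prec_last ?ltnn //; lia.
by apply: contra; apply: (prec_le_r a_le); lia.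
Qed.

Lemma aU_passes D : is_aU a n D -> passes D t n.
Proof.
move=> aD; have [_ cD _] := aD.1; have rD := dyck_nright aD.1.
case: (ltnP t n) => tn.
  by have := @passes_rstep D t; rewrite aU_column_top // rD; apply.
have -> : t = n by lia.
by rewrite -{1}rD -cD; apply: passes_end.
Qed.

Lemma aU_add_final_peak D : is_aU a n D -> is_aU a n.+1 (add_final_peak n D t).
Proof.
move=> aD; have pD := aU_passes aD; have [_ cD _] := aD.1.
split; first exact: dyck_add_final_peak aD.1 pD.
move=> [|i] j //; rewrite /area rheightE rstep_height_add_final_peak //.
case: (ltnP i.+1 j) => ij; case: (leqP j n.+1) => jn //=.
case: ifP => it.
  case: (ltnP j n.+1) => [jn'|jn']; first by rewrite (area_aU aD).
  have -> : j = n.+1 by lia.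
  by have := rstep_height_le D i; rewrite cD prec_last ?it /=; lia.
rewrite jn; apply/esym.
have : ~~ prec a i.+1 n.+1 by rewrite prec_last; lia.
by apply: contra; apply: (prec_le_r a_le); lia.
Qed.

End AddIntervalRight.

Theorem mainTheorem9 (R : realType) (n : nat) (a : nat -> R) :
  left_to_right a n.+1 ->
  (exists D, is_aU a n D) /\
  forall D : seq bool, is_aU a n D ->
    passes D (n - s_incomp a n) n /\
    is_aU a n.+1 (add_final_peak n D (n - s_incomp a n)).
Proof.
move=> a_le; split.
  by apply: aU_exists => i i1 iN; apply: a_le => //; apply: ltnW.
by move=> D aD; split; [apply: aU_passes | apply: aU_add_final_peak].
Qed.
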